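(* Let $k$ be an infinite field of characteristic $0$. (i) If $W=W(X,Y)\in\Xi'$, $H=(L,V)\in\Xi$, and $(T_1,T_2)$ is an $H$-closed congruence of $W$, then $T_1\oplus T_2\subseteq\mathcal{F}(W)$ is an $\mathcal{F}(H)$-closed congruence. (ii) If $F(M)\in\mathrm{Ob}\,\Theta^0$, $(N,p)\in\Theta$, and $T\subseteq F(M)$ is an $N$-closed congruence, then $(T\cap\ker p,\,T\cap\mathrm{im}\,p)\subseteq\mathcal{F}^{-1}(F(M))$ is an $\mathcal{F}^{-1}(N)$-closed congruence (here $p$ in $\ker p$, $\mathrm{im}\,p$ is the projection of $F(M)$). (iii) The maps $\mathcal{F}_{W,H}:Cl_H(W)\to Cl_{\mathcal{F}(H)}(\mathcal{F}(W))$, $(T_1,T_2)\mapsto T_1\oplus T_2$, and $\mathcal{F}^{-1}_{F(M),N}:Cl_N(F(M))\to Cl_{\mathcal{F}^{-1}(N)}(\mathcal{F}^{-1}(F(M)))$, $T\mapsto(T\cap\ker p,T\cap\mathrm{im}\,p)$, are bijections.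
   Context: Representations $(L,V)$ (Lie algebra $L$ over $k$, $L$-module $V$) with homomorphisms $(\varphi,\psi)$ ($\varphi$ Lie homomorphism, $\psi$ linear, $\varphi(l)\circ\psi(v)=\psi(l\circ v)$) form $\Xi$. $W(X,Y)=(L(X),A(X)Y)$ is the free representation ($L(X)$ free Lie algebra, $A(X)$ free unital associative algebra, $A(X)Y$ free $A(X)$-module with basis $Y$); $\Xi'$ is the set of $W(X,Y)$ with $X,Y$ finite subsets of fixed countable sets and $|X|=|Y|$. A Lie algebra with projection-derivation is a Lie algebra $M$ with linear $p$, $p^2=p$, $p[m_1,m_2]=[pm_1,m_2]+[m_1,pm_2]$; these form the variety $\Theta$ (homomorphisms commute with $p$), and $\Theta^0$ consists of the free algebras $F(M)$ of $\Theta$ on finite subsets $M$ of a fixed countable set. $\mathcal{F}(L,V)=(L\oplus V,p_V)$ with $[l_1+v_1,l_2+v_2]=[l_1,l_2]+l_1\circ v_2-l_2\circ v_1$, $p_V(l+v)=v$; $\mathcal{F}^{-1}(M,p)=(\ker p,\mathrm{im}\,p)$ with $l\circ v=[l,v]$. Closedness: for an algebra $H$ and a free object $W$ (of either kind) and a subset $T$ of $W$ (a pair $(T_1,T_2)$ of subsets of the two sorts in the representation case), $T'_H$ is the set of homomorphisms $W\to H$ whose kernel contains $T$ (sortwise), $T''_H$ is the (sortwise) intersection of their kernels, $T$ is $H$-closed if $T''_H=T$, and $Cl_H(W)$ is the set of $H$-closed subsets of $W$. *)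

From HB Require Import structures.
From mathcomp Require Import all_boot all_algebra.
From mathcomp Require Import boolp.
Set Implicit Arguments. Unset Strict Implicit. Unset Printing Implicit Defensive.
Import GRing.Theory.
Local Open Scope ring_scope.

Section Defs.
Variable k : fieldType.

Record LieD := { lcar : lmodType k; lbr : lcar -> lcar -> lcar }.

Definition linmap (U V : lmodType k) (f : U -> V) :=
  forall (a : k) (x y : U), f (a *: x + y) = a *: f x + f y.

Definition bilin (U V W : lmodType k) (b : U -> V -> W) :=
  (forall u, linmap (b u)) /\ (forall v, linmap (fun u => b u v)).

Definition is_lie (L : LieD) :=
  [/\ bilin (@lbr L),
      forall x : lcar L, lbr x x = 0 &
      forall x y z : lcar L,
        lbr x (lbr y z) + lbr y (lbr z x) + lbr z (lbr x y) = 0].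

Definition lie_hom (L L' : LieD) (f : lcar L -> lcar L') :=
  linmap f /\ forall x y, f (lbr x y) = lbr (f x) (f y).

Record ReprD := { rL : LieD; rV : lmodType k; ract : lcar rL -> rV -> rV }.

Definition is_repr (H : ReprD) :=
  [/\ is_lie (rL H), bilin (@ract H) &
      forall (l1 l2 : lcar (rL H)) (v : rV H),
        ract (lbr l1 l2) v = ract l1 (ract l2 v) - ract l2 (ract l1 v)].

Definition rhom (W H : ReprD) (phi : lcar (rL W) -> lcar (rL H))
    (psi : rV W -> rV H) :=
  [/\ lie_hom phi, linmap psi &
      forall l v, ract (phi l) (psi v) = psi (ract l v)].

(* W is the free representation W(X,Y) = (L(X), A(X)Y) on the generating
   sets X (Lie sort) and Y (module sort): universal property in Xi. *)
Definition free_repr (X Y : Type) (W : ReprD)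
    (ix : X -> lcar (rL W)) (iy : Y -> rV W) :=
  is_repr W /\
  forall H : ReprD, is_repr H ->
  forall (f : X -> lcar (rL H)) (g : Y -> rV H),
  exists phi psi,
    [/\ @rhom W H phi psi, (forall x, phi (ix x) = f x),
        (forall y, psi (iy y) = g y) &
        forall phi' psi', @rhom W H phi' psi' ->
          (forall x, phi' (ix x) = f x) -> (forall y, psi' (iy y) = g y) ->
          (forall l, phi' l = phi l) /\ (forall v, psi' v = psi v)].

Definition subspace (U : lmodType k) (T : U -> Prop) :=
  T 0 /\ forall (a : k) x y, T x -> T y -> T (a *: x + y).

Definition rcong (W : ReprD) (T1 : lcar (rL W) -> Prop) (T2 : rV W -> Prop) :=
  [/\ subspace T1, subspace T2,
      (forall l t, T1 t -> T1 (lbr l t)),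
      (forall l v, T2 v -> T2 (ract l v)) &
      (forall t v, T1 t -> T2 (ract t v))].

(* H-closedness: (T1,T2)''_H = (T1,T2), where (T1,T2)''_H is the sortwise
   intersection of the kernels of all homs W -> H whose kernel contains T *)
Definition rclosed (W H : ReprD) (T1 : lcar (rL W) -> Prop) (T2 : rV W -> Prop) :=
  (forall l, T1 l <->
     (forall phi psi, @rhom W H phi psi ->
        (forall t, T1 t -> phi t = 0) -> (forall t, T2 t -> psi t = 0) ->
        phi l = 0)) /\
  (forall v, T2 v <->
     (forall phi psi, @rhom W H phi psi ->
        (forall t, T1 t -> phi t = 0) -> (forall t, T2 t -> psi t = 0) ->
        psi v = 0)).

Record LiePD := { pL : LieD; pp : {linear lcar pL -> lcar pL} }.

Definition is_liep (N : LiePD) :=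
  [/\ is_lie (pL N), (forall x, pp N (pp N x) = pp N x) &
      forall x y, pp N (lbr x y) = lbr (pp N x) y + lbr x (pp N y)].

Definition phom (N N' : LiePD) (f : lcar (pL N) -> lcar (pL N')) :=
  lie_hom f /\ forall x, f (pp N x) = pp N' (f x).

Definition free_liep (M : Type) (F : LiePD) (iM : M -> lcar (pL F)) :=
  is_liep F /\
  forall N : LiePD, is_liep N -> forall g : M -> lcar (pL N),
  exists h, [/\ @phom F N h, (forall m, h (iM m) = g m) &
     forall h', @phom F N h' -> (forall m, h' (iM m) = g m) ->
       forall x, h' x = h x].

Definition pcong (N : LiePD) (T : lcar (pL N) -> Prop) :=
  [/\ subspace T, (forall x t, T t -> T (lbr x t)) &
      (forall t, T t -> T (pp N t))].

Definition pclosed (F N : LiePD) (T : lcar (pL F) -> Prop) :=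
  forall x, T x <->
    (forall h, @phom F N h -> (forall t, T t -> h t = 0) -> h x = 0).

Section FunctorF.
Variable H : ReprD.
Local Notation FL := (lcar (rL H) * rV H)%type.
Definition Fbr (x y : FL) : FL :=
  (lbr x.1 y.1, ract x.1 y.2 - ract y.1 x.2).
Definition pV (x : FL) : FL := (0, x.2).
Fact pV_linear : linear pV.
Proof.
move=> a x y; rewrite /pV /=.
have e : forall u : FL, u = (u.1, u.2) by case.
rewrite [RHS]e; congr pair => //.
by rewrite /= GRing.scaler0 GRing.addr0.
Qed.
HB.instance Definition _ := GRing.isLinear.Build k FL FL *:%R pV pV_linear.
Definition Ffun : LiePD :=
  {| pL := {| lcar := FL; lbr := Fbr |}; pp := pV |}.
End FunctorF.

Definition dsum (H : ReprD) (T1 : lcar (rL H) -> Prop) (T2 : rV H -> Prop)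
  : lcar (pL (Ffun H)) -> Prop := fun x => T1 x.1 /\ T2 x.2.

Section FunctorFinv.
Variable N : LiePD.
Let M := lcar (pL N).
Let p := pp N.

Definition kerp_pred : {pred M} := fun x => p x == 0.
Fact kerp_closed : GRing.subsemimod_closed kerp_pred.
Proof.
split; first split.
- by rewrite unfold_in /kerp_pred /= GRing.linear0.
- move=> x y; rewrite !unfold_in /kerp_pred /= => /eqP hx /eqP hy.
  by rewrite GRing.linearD hx hy GRing.addr0.
- move=> a x; rewrite !unfold_in /kerp_pred /= => /eqP hx.
  by rewrite GRing.linearZ_LR hx GRing.scaler0.
Qed.
HB.instance Definition _ := GRing.isSubmodClosed.Build k M kerp_pred kerp_closed.
Inductive kerT : Type := KerT (x : M) of x \in kerp_pred.
Definition kerval (u : kerT) : M := let: KerT x _ := u in x.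
HB.instance Definition _ := [isSub of kerT for kerval].
HB.instance Definition _ := [Choice of kerT by <:].
HB.instance Definition _ := [SubChoice_isSubLmodule of kerT by <:].

Definition imp_pred : {pred M} := fun x => `[< exists y, p y = x >].
Fact imp_closed : GRing.subsemimod_closed imp_pred.
Proof.
split; first split.
- by rewrite unfold_in /imp_pred; apply/asboolP; exists 0; rewrite GRing.linear0.
- move=> x y; rewrite !unfold_in /imp_pred => /asboolP [x' <-] /asboolP [y' <-].
  by apply/asboolP; exists (x' + y'); rewrite GRing.linearD.
- move=> a x; rewrite !unfold_in /imp_pred => /asboolP [x' <-].
  by apply/asboolP; exists (a *: x'); rewrite GRing.linearZ.
Qed.
HB.instance Definition _ := GRing.isSubmodClosed.Build k M imp_pred imp_closed.
Inductive imT : Type := ImT (x : M) of x \in imp_pred.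
Definition imval (u : imT) : M := let: ImT x _ := u in x.
HB.instance Definition _ := [isSub of imT for imval].
HB.instance Definition _ := [Choice of imT by <:].
HB.instance Definition _ := [SubChoice_isSubLmodule of imT by <:].

(* restricted bracket and action; for N in Theta the bracket of M maps
   ker p x ker p into ker p and ker p x im p into im p, so insubd is the
   genuine restriction (the default 0 is never used). *)
Definition kerbr (x y : kerT) : kerT := insubd (0 : kerT) (lbr (kerval x) (kerval y)).
Definition imact (x : kerT) (v : imT) : imT := insubd (0 : imT) (lbr (kerval x) (imval v)).

Definition Finv : ReprD :=
  {| rL := {| lcar := kerT; lbr := kerbr |}; rV := imT; ract := imact |}.
End FunctorFinv.

Definition kerpart (F : LiePD) (T : lcar (pL F) -> Prop)
  : lcar (rL (Finv F)) -> Prop := fun x => T (kerval x).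
Definition impart (F : LiePD) (T : lcar (pL F) -> Prop)
  : rV (Finv F) -> Prop := fun v => T (imval v).

End Defs.

Arguments free_repr {k X Y} W ix iy.
Arguments rcong {k W} T1 T2.
Arguments rclosed {k W} H T1 T2.
Arguments pcong {k N} T.
Arguments pclosed {k F} N T.
Arguments free_liep {k M} F iM.
Arguments dsum {k H} T1 T2.
Arguments kerpart {k F} T.
Arguments impart {k F} T.
Arguments Ffun {k} H.
Arguments Finv {k} N.
Arguments is_repr {k} H.
Arguments is_liep {k} N.

From HB Require Import structures.
From mathcomp Require Import all_boot all_algebra.
From mathcomp Require Import boolp.
Import GRing.Theory.
Local Open Scope ring_scope.
Set Implicit Arguments. Unset Strict Implicit. Unset Printing Implicit Defensive.

(* Both functors are fully faithful.  A homomorphism F(W) -> F(H) commuting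
   with the projections p_V has vanishing off-diagonal blocks, so it is
   F(phi, psi) for a homomorphism (phi, psi) : W -> H.  Conversely a
   homomorphism (phi, psi) : F^{-1}(M) -> F^{-1}(N) glues to phi (+) psi on
   M = ker p (+) im p, which respects brackets because im p is abelian:
   p [b, d] = 2 [b, d] on im p, and p^2 = p then forces [b, d] = 0 once
   2 != 0.  Hence the Galois closures T |-> T'' on both sides correspond
   through T1 (+) T2 and (T cap ker p, T cap im p), and so do the closed
   sets. *)

Section Preliminaries.
Variable k : fieldType.
Implicit Types U V : lmodType k.

Lemma linmap0 U V (f : U -> V) : linmap f -> f 0 = 0.
Proof.
move=> hf; have := hf 1 0 0; rewrite !scale1r addr0 => e.
by apply: (addrI (f 0)); rewrite addr0 -e.
Qed.

Lemma linmapD U V (f : U -> V) : linmap f -> forall x y, f (x + y) = f x + f y.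
Proof. by move=> hf x y; have := hf 1 x y; rewrite !scale1r. Qed.

Lemma linmapZ U V (f : U -> V) : linmap f -> forall a x, f (a *: x) = a *: f x.
Proof. by move=> hf a x; have := hf a x 0; rewrite addr0 (linmap0 hf) addr0. Qed.

Lemma linmapB U V (f : U -> V) : linmap f -> forall x y, f (x - y) = f x - f y.
Proof. by move=> hf x y; rewrite (linmapD hf) -scaleN1r (linmapZ hf) scaleN1r. Qed.

Lemma linmap_comp U V (W : lmodType k) (f : U -> V) (g : V -> W) :
  linmap f -> linmap g -> linmap (g \o f).
Proof. by move=> hf hg a x y; rewrite /= hf hg. Qed.

Lemma linmap_add U V (f g : U -> V) :
  linmap f -> linmap g -> linmap (fun x => f x + g x).
Proof. by move=> hf hg a x y; rewrite hf hg scalerDr addrACA. Qed.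

Lemma subspaceD U (T : U -> Prop) : subspace T -> forall x y, T x -> T y -> T (x + y).
Proof. by move=> hT x y hx hy; have := hT.2 1 x y hx hy; rewrite scale1r. Qed.

Lemma subspaceN U (T : U -> Prop) : subspace T -> forall x, T x -> T (- x).
Proof. by move=> hT x hx; have := hT.2 (-1) x 0 hx hT.1; rewrite addr0 scaleN1r. Qed.

Lemma subspaceB U (T : U -> Prop) : subspace T -> forall x y, T x -> T y -> T (x - y).
Proof. by move=> hT x y hx hy; apply: subspaceD => //; apply: subspaceN. Qed.

Lemma pair_ext (A B : Type) (u v : A * B) : u.1 = v.1 -> u.2 = v.2 -> u = v.
Proof. by case: u v => [a b] [c d] /= -> ->. Qed.

Section Lie.
Variable L : LieD k.
Hypothesis hL : is_lie L.

Lemma lie_br0r (x : lcar L) : lbr x 0 = 0.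
Proof. by case: hL => -[hb _] _ _; exact: linmap0 (hb x). Qed.

Lemma lie_br0l (x : lcar L) : lbr 0 x = 0.
Proof. by case: hL => -[_ hb] _ _; exact: linmap0 (hb x). Qed.

Lemma lie_brC (x y : lcar L) : lbr x y = - lbr y x.
Proof.
case: hL => -[hr hl] hxx _; have := hxx (x + y).
rewrite (linmapD (hl _)) !(linmapD (hr _)) !hxx add0r addr0.
by move/eqP; rewrite addr_eq0 => /eqP.
Qed.

End Lie.

Definition rclosure1 (W H : ReprD k) (T1 : lcar (rL W) -> Prop)
    (T2 : rV W -> Prop) (l : lcar (rL W)) : Prop :=
  forall phi psi, @rhom k W H phi psi ->
    (forall t, T1 t -> phi t = 0) -> (forall t, T2 t -> psi t = 0) -> phi l = 0.

Definition rclosure2 (W H : ReprD k) (T1 : lcar (rL W) -> Prop)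
    (T2 : rV W -> Prop) (v : rV W) : Prop :=
  forall phi psi, @rhom k W H phi psi ->
    (forall t, T1 t -> phi t = 0) -> (forall t, T2 t -> psi t = 0) -> psi v = 0.

Definition pclosure (F N : LiePD k) (T : lcar (pL F) -> Prop)
    (x : lcar (pL F)) : Prop :=
  forall h, @phom k F N h -> (forall t, T t -> h t = 0) -> h x = 0.

Lemma rclosure1_0 (W H : ReprD k) T1 T2 : @rclosure1 W H T1 T2 0.
Proof. by move=> phi psi [[hl _] _ _] _ _; exact: linmap0 hl. Qed.

Lemma rclosure2_0 (W H : ReprD k) T1 T2 : @rclosure2 W H T1 T2 0.
Proof. by move=> phi psi [_ hs _] _ _; exact: linmap0 hs. Qed.

Lemma rclosed0 (W H : ReprD k) T1 T2 : @rclosed k W H T1 T2 -> T1 0 /\ T2 0.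
Proof.
by case=> c1 c2; split; [apply/c1; apply: rclosure1_0 | apply/c2; apply: rclosure2_0].
Qed.

Lemma pclosed_subspace (F N : LiePD k) T : @pclosed k F N T -> subspace T.
Proof.
move=> hT; split; first by apply/hT => h [[hl _] _] _; exact: linmap0 hl.
move=> a x y tx ty; apply/hT => h [[hl _] _] hk.
by rewrite hl !hk // scaler0 addr0.
Qed.

Lemma pclosed_pp (F N : LiePD k) T : @pclosed k F N T -> forall x, T x -> T (pp F x).
Proof. by move=> hT x tx; apply/hT => h [_ hp] hk; rewrite hp hk // linear0. Qed.

End Preliminaries.

Section FunctorF.
Variable k : fieldType.
Variables W H : ReprD k.
Hypotheses (hW : is_repr W) (hH : is_repr H).
Local Notation FW := (lcar (pL (Ffun W))).
Local Notation FH := (lcar (pL (Ffun H))).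

Definition Fmap (phi : lcar (rL W) -> lcar (rL H)) (psi : rV W -> rV H)
  (x : FW) : FH := (phi x.1, psi x.2).

Definition Fcomp1 (h : FW -> FH) (l : lcar (rL W)) : lcar (rL H) := (h (l, 0)).1.
Definition Fcomp2 (h : FW -> FH) (v : rV W) : rV H := (h (0, v)).2.

Lemma Fmap_phom phi psi : rhom phi psi -> phom (Fmap phi psi).
Proof.
case=> [[hl hb] hs ha]; split; first split.
- by move=> a x y; apply: pair_ext => /=; rewrite ?hl ?hs.
- move=> x y; apply: pair_ext => /=; first by rewrite hb.
  by rewrite (linmapB hs) -!ha.
- by move=> x; apply: pair_ext => //=; rewrite (linmap0 hl).
Qed.

Lemma phom_offdiag (h : FW -> FH) : phom h ->
  (forall l, (h (l, 0)).2 = 0) /\ (forall v, (h (0, v)).1 = 0).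
Proof.
case=> [[hl _] hp]; split=> [l | v].
- have := hp (l, 0); rewrite (_ : pp (Ffun W) (l, 0) = 0); last exact: pair_ext.
  by rewrite (linmap0 hl) => /(congr1 snd) /= <-.
- have := hp (0, v); rewrite (_ : pp (Ffun W) (0, v) = (0, v)); last exact: pair_ext.
  by move=> /(congr1 fst) /= ->.
Qed.

Lemma phom_Fmap (h : FW -> FH) : phom h -> forall x, h x = Fmap (Fcomp1 h) (Fcomp2 h) x.
Proof.
move=> hh x; have [h21 h12] := phom_offdiag hh; have [[hl _] _] := hh.
have ex : x = (x.1, 0) + (0, x.2) by apply: pair_ext => /=; rewrite ?addr0 ?add0r.
rewrite {1}ex (linmapD hl); apply: pair_ext => /=.
- by rewrite h12 addr0.
- by rewrite h21 add0r.
Qed.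

Lemma phom_rhom (h : FW -> FH) : phom h -> rhom (Fcomp1 h) (Fcomp2 h).
Proof.
move=> hh; have [h21 _] := phom_offdiag hh.
case: hW hH => [hWl hWa _] [_ hHa _]; case: hh => [[hl hb] _].
split; first split.
- move=> a x y; rewrite /Fcomp1.
  rewrite (_ : ((a *: x + y, 0) : FW) = a *: (x, 0) + (y, 0)) ?hl //.
  by apply: pair_ext => //=; rewrite scaler0 addr0.
- move=> x y; rewrite /Fcomp1.
  rewrite (_ : ((lbr x y, 0) : FW) = lbr ((x, 0) : FW) (y, 0)) ?hb //.
  by apply: pair_ext => //=; rewrite !(linmap0 (hWa.1 _)) subrr.
- move=> a x y; rewrite /Fcomp2.
  rewrite (_ : ((0, a *: x + y) : FW) = a *: (0, x) + (0, y)) ?hl //.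
  by apply: pair_ext => //=; rewrite scaler0 addr0.
- move=> l v; rewrite /Fcomp1 /Fcomp2.
  rewrite (_ : ((0, ract l v) : FW) = lbr ((l, 0) : FW) (0, v)); last first.
    by apply: pair_ext => /=; rewrite ?lie_br0r // (linmap0 (hWa.1 _)) subr0.
  by rewrite hb /= h21 (linmap0 (hHa.1 _)) subr0.
Qed.

Lemma pclosure_dsum (T1 : lcar (rL W) -> Prop) (T2 : rV W -> Prop) :
  T1 0 -> T2 0 -> forall x : FW,
  pclosure (Ffun H) (dsum T1 T2) x <-> rclosure1 H T1 T2 x.1 /\ rclosure2 H T1 T2 x.2.
Proof.
move=> t1 t2 x; split=> [cx | [c1 c2] h hh hk].
- suff key phi psi : @rhom k W H phi psi -> (forall t, T1 t -> phi t = 0) ->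
      (forall t, T2 t -> psi t = 0) -> Fmap phi psi x = 0.
    by split=> phi psi hr k1 k2; have := key _ _ hr k1 k2;
      [move/(congr1 fst) | move/(congr1 snd)].
  move=> hr k1 k2; apply: cx (Fmap_phom hr) _ => t [/k1 e1 /k2 e2].
  exact: pair_ext.
- have k1 t : T1 t -> Fcomp1 h t = 0 by move=> tt; rewrite /Fcomp1 hk.
  have k2 t : T2 t -> Fcomp2 h t = 0 by move=> tt; rewrite /Fcomp2 hk.
  rewrite (phom_Fmap hh); apply: pair_ext.
  + exact: c1 (phom_rhom hh) k1 k2.
  + exact: c2 (phom_rhom hh) k1 k2.
Qed.

Lemma rclosed_dsumP (T1 : lcar (rL W) -> Prop) (T2 : rV W -> Prop) :
  rclosed H T1 T2 <-> pclosed (Ffun H) (dsum T1 T2).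
Proof.
split=> [hc | hc].
- have [t1 t2] := rclosed0 hc; case: hc => c1 c2 x.
  change (dsum T1 T2 x <-> pclosure (Ffun H) (dsum T1 T2) x).
  by rewrite pclosure_dsum //; split=> -[/c1 ? /c2 ?].
- have [t1 t2] : T1 0 /\ T2 0 := (pclosed_subspace hc).1.
  split=> [l | v].
  + have e : dsum T1 T2 (l, 0) <-> pclosure (Ffun H) (dsum T1 T2) (l, 0) := hc _.
    rewrite pclosure_dsum // in e.
    split=> [tl | cl]; first exact: (e.1 (conj tl t2)).1.
    exact: (e.2 (conj cl (@rclosure2_0 _ _ _ _ _))).1.
  + have e : dsum T1 T2 (0, v) <-> pclosure (Ffun H) (dsum T1 T2) (0, v) := hc _.
    rewrite pclosure_dsum // in e.
    split=> [tv | cv]; first exact: (e.1 (conj t1 tv)).2.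
    exact: (e.2 (conj (@rclosure1_0 _ _ _ _ _) cv)).2.
Qed.

Lemma pclosed_dsum (S : FW -> Prop) : pclosed (Ffun H) S ->
  S = dsum (fun l => S (l, 0)) (fun v => S (0, v)).
Proof.
move=> hS; have hs := pclosed_subspace hS; have hp := pclosed_pp hS.
apply: funext => x; apply: propext; split=> [sx | [s1 s2]].
- have s2 : S (0, x.2) by exact: hp _ sx.
  split=> //; rewrite (_ : ((x.1, 0) : FW) = x - (0, x.2)); first exact: subspaceB.
  by apply: pair_ext => /=; rewrite ?subr0 ?subrr.
- rewrite (_ : x = (x.1, 0) + (0, x.2)); first exact: subspaceD.
  by apply: pair_ext => /=; rewrite ?addr0 ?add0r.
Qed.

Lemma dsum_inj (T1 S1 : lcar (rL W) -> Prop) (T2 S2 : rV W -> Prop) :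
  T1 0 -> T2 0 -> S1 0 -> S2 0 -> dsum T1 T2 = dsum S1 S2 -> T1 = S1 /\ T2 = S2.
Proof.
move=> t1 t2 s1 s2 e.
have e1 x : (T1 x /\ T2 0) = (S1 x /\ S2 0) := congr1 (fun S : FW -> Prop => S (x, 0)) e.
have e2 v : (T1 0 /\ T2 v) = (S1 0 /\ S2 v) := congr1 (fun S : FW -> Prop => S (0, v)) e.
split; apply: funext => x; apply: propext; split=> h.
- by have [] : S1 x /\ S2 0 by rewrite -e1.
- by have [] : T1 x /\ T2 0 by rewrite e1.
- by have [] : S1 0 /\ S2 x by rewrite -e2.
- by have [] : T1 0 /\ T2 x by rewrite e2.
Qed.

Lemma dsum_pcong (T1 : lcar (rL W) -> Prop) (T2 : rV W -> Prop) :
  rcong T1 T2 -> pcong (dsum T1 T2).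
Proof.
case=> [s1 s2 i1 i2 i12]; split.
- split; first by split; [exact: s1.1 | exact: s2.1].
  by move=> a x y [hx1 hx2] [hy1 hy2]; split; [exact: s1.2 | exact: s2.2].
- by move=> x t [ht1 ht2]; split; [exact: i1 | apply: subspaceB; auto].
- by move=> t [_ ht2]; split; [exact: s1.1 | exact: ht2].
Qed.

End FunctorF.

Section ThetaSubobjects.
Variable k : fieldType.
Variable N : LiePD k.

Lemma pp_kerval (u : kerT N) : pp N (kerval u) = 0.
Proof. by case: u => x /=; rewrite unfold_in => /eqP. Qed.

Lemma kerval_insubd x : pp N x = 0 -> kerval (insubd (0 : kerT N) x) = x.
Proof. by move=> px; apply: insubdK; apply/eqP. Qed.

Lemma imval_insubd x : pp N x = x -> imval (insubd (0 : imT N) x) = x.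
Proof. by move=> px; apply: insubdK; rewrite unfold_in; apply/asboolP; exists x. Qed.

Hypothesis hN : is_liep N.

Lemma liep_lie : is_lie (pL N). Proof. by case: hN. Qed.

Lemma pp_id x : pp N (pp N x) = pp N x. Proof. by case: hN. Qed.

Lemma pp_lbr x y : pp N (lbr x y) = lbr (pp N x) y + lbr x (pp N y).
Proof. by case: hN. Qed.

Lemma pp_imval (u : imT N) : pp N (imval u) = imval u.
Proof.
case: u => x /=; rewrite unfold_in => /asboolP [y <-].
exact: pp_id.
Qed.

Lemma kerbrE (x y : kerT N) : kerval (kerbr x y) = lbr (kerval x) (kerval y).
Proof.
apply: kerval_insubd.
by rewrite pp_lbr !pp_kerval lie_br0l ?lie_br0r ?addr0 //; exact: liep_lie.
Qed.

Lemma imactE (x : kerT N) (v : imT N) : imval (imact x v) = lbr (kerval x) (imval v).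
Proof.
apply: imval_insubd.
by rewrite pp_lbr pp_kerval pp_imval lie_br0l ?add0r //; exact: liep_lie.
Qed.

Lemma kerval_imval_eq0 (a : kerT N) (b : imT N) :
  kerval a + imval b = 0 -> a = 0 /\ b = 0.
Proof.
move=> e; have := congr1 (pp N) e.
rewrite linearD pp_kerval pp_imval add0r linear0 => eb.
by split; apply: val_inj => //; move: e; rewrite /= eb addr0.
Qed.

End ThetaSubobjects.

Section KerImDecomposition.
Variable k : fieldType.
Variable F : LiePD k.
Hypothesis hF : is_liep F.
Local Notation M := (lcar (pL F)).

Definition kp (x : M) : kerT F := insubd 0 (x - pp F x).
Definition ip (x : M) : imT F := insubd 0 (pp F x).

Lemma kpE x : kerval (kp x) = x - pp F x.
Proof. by apply: kerval_insubd; rewrite linearB (pp_id hF) subrr. Qed.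

Lemma ipE x : imval (ip x) = pp F x.
Proof. by apply: imval_insubd; rewrite (pp_id hF). Qed.

Lemma kp_linmap : @linmap k M (lcar (rL (Finv F))) kp.
Proof.
move=> a x y; apply: val_inj; rewrite /= !kpE linearP.
by rewrite scalerBr opprD addrACA.
Qed.

Lemma ip_linmap : @linmap k M (rV (Finv F)) ip.
Proof. by move=> a x y; apply: val_inj; rewrite /= !ipE linearP. Qed.

Lemma kerim_decomp x : x = kerval (kp x) + imval (ip x).
Proof. by rewrite kpE ipE subrK. Qed.

Lemma kp_kerval (l : kerT F) : kp (kerval l) = l.
Proof. by apply: val_inj; rewrite /= kpE pp_kerval subr0. Qed.

Lemma ip_kerval (l : kerT F) : ip (kerval l) = 0.
Proof. by apply: val_inj; rewrite /= ipE pp_kerval. Qed.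

Lemma kp_imval (v : imT F) : kp (imval v) = 0.
Proof. by apply: val_inj; rewrite /= kpE (pp_imval hF) subrr. Qed.

Lemma ip_imval (v : imT F) : ip (imval v) = v.
Proof. by apply: val_inj; rewrite /= ipE (pp_imval hF). Qed.

Lemma kp_pp x : kp (pp F x) = 0.
Proof. by apply: val_inj; rewrite /= kpE (pp_id hF) subrr. Qed.

Lemma ip_pp x : ip (pp F x) = ip x.
Proof. by apply: val_inj; rewrite /= !ipE (pp_id hF). Qed.

Hypothesis two_neq0 : (2%:R : k) != 0.

Lemma lbr_im_im (b d : M) : pp F b = b -> pp F d = d -> lbr b d = 0.
Proof.
move=> pb pd; set c := lbr b d.
have pc : pp F c = c + c by rewrite /c pp_lbr // pb pd.
have c2 : c + c = 0.
  have := pp_id hF c; rewrite pc linearD pc => e.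
  by apply: (addrI (c + c)); rewrite addr0.
have : (2%:R : k) *: c == 0 by rewrite scaler_nat mulr2n c2.
by rewrite scaler_eq0 (negbTE two_neq0) => /eqP.
Qed.

Lemma lbr_kerim (a b c d : M) : pp F a = 0 -> pp F c = 0 -> pp F b = b -> pp F d = d ->
  lbr (a + b) (c + d) = lbr a c + (lbr a d - lbr c b).
Proof.
move=> pa pc pb pd; have [[hr hl] _ _] := liep_lie hF.
rewrite (linmapD (hl _)) !(linmapD (hr _)) (lbr_im_im pb pd) addr0.
by rewrite [lbr b c](lie_brC (liep_lie hF)) -addrA.
Qed.

Lemma pp_lbr_kerim (a b c d : M) : pp F a = 0 -> pp F c = 0 -> pp F b = b -> pp F d = d ->
  pp F (lbr a c) = 0 /\ pp F (lbr a d - lbr c b) = lbr a d - lbr c b.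
Proof.
move=> pa pc pb pd; have hL := liep_lie hF.
rewrite linearB !(pp_lbr hF) pa pc pb pd !(lie_br0l hL) !(lie_br0r hL).
by rewrite !add0r.
Qed.

Lemma kp_lbr x y : kp (lbr x y) = kerbr (kp x) (kp y).
Proof.
apply: val_inj; rewrite /= (kerbrE hF) kpE.
have [pa pc] := (pp_kerval (kp x), pp_kerval (kp y)).
have [pb pd] := (pp_imval hF (ip x), pp_imval hF (ip y)).
rewrite {1 2}(kerim_decomp x) {1 2}(kerim_decomp y) lbr_kerim //.
have [e1 e2] := pp_lbr_kerim pa pc pb pd.
by rewrite linearD e1 e2 add0r addrK.
Qed.

Lemma ip_lbr x y : ip (lbr x y) = imact (kp x) (ip y) - imact (kp y) (ip x).
Proof.
apply: val_inj; rewrite /= !(imactE hF) ipE.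
have [pa pc] := (pp_kerval (kp x), pp_kerval (kp y)).
have [pb pd] := (pp_imval hF (ip x), pp_imval hF (ip y)).
rewrite {1}(kerim_decomp x) {1}(kerim_decomp y) lbr_kerim //.
have [e1 e2] := pp_lbr_kerim pa pc pb pd.
by rewrite linearD e1 e2 add0r.
Qed.

End KerImDecomposition.

Section FunctorFinv.
Variable k : fieldType.
Variables F N : LiePD k.
Hypotheses (hF : is_liep F) (hN : is_liep N).

Section Restriction.
Variable h : lcar (pL F) -> lcar (pL N).
Hypothesis hh : phom h.

Definition kerres (u : kerT F) : kerT N := insubd 0 (h (kerval u)).
Definition imres (u : imT F) : imT N := insubd 0 (h (imval u)).

Lemma kerresE u : kerval (kerres u) = h (kerval u).
Proof.
by case: hh => -[hl _] hp; apply: kerval_insubd; rewrite -hp pp_kerval (linmap0 hl).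
Qed.

Lemma imresE u : imval (imres u) = h (imval u).
Proof. by case: hh => _ hp; apply: imval_insubd; rewrite -hp (pp_imval hF). Qed.

Lemma res_rhom : @rhom k (Finv F) (Finv N) kerres imres.
Proof.
case: hh => [[hl hb] hp]; split; first split.
- by move=> a x y; apply: val_inj; rewrite /= !kerresE hl.
- by move=> x y; apply: val_inj; rewrite /= (kerbrE hN) !kerresE (kerbrE hF) hb.
- by move=> a x y; apply: val_inj; rewrite /= !imresE hl.
- by move=> l v; apply: val_inj; rewrite /= (imactE hN) kerresE !imresE (imactE hF) hb.
Qed.

End Restriction.

Hypothesis two_neq0 : (2%:R : k) != 0.

Section Gluing.
Variables (phi : kerT F -> kerT N) (psi : imT F -> imT N).
Hypothesis hr : @rhom k (Finv F) (Finv N) phi psi.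

Definition glue (x : lcar (pL F)) : lcar (pL N) :=
  kerval (phi (kp x)) + imval (psi (ip x)).

Lemma glue_phom : phom glue.
Proof.
case: hr => [[hl hb] hs ha]; split; first split.
- apply: linmap_add.
  + by apply: linmap_comp (linmap_comp (kp_linmap hF) hl) _.
  + by apply: linmap_comp (linmap_comp (ip_linmap hF) hs) _.
- move=> x y; rewrite /glue (kp_lbr hF two_neq0) (ip_lbr hF two_neq0) hb (linmapB hs) -!ha.
  rewrite /= (kerbrE hN) !(imactE hN) lbr_kerim //;
    by [exact: pp_kerval | exact: pp_imval].
- move=> x; rewrite /glue kp_pp // ip_pp // (linmap0 hl) add0r.
  by rewrite linearD pp_kerval add0r (pp_imval hN).
Qed.

End Gluing.

Definition kerim_sum (S1 : lcar (rL (Finv F)) -> Prop) (S2 : rV (Finv F) -> Prop)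
  (x : lcar (pL F)) : Prop :=
  S1 (kp x) /\ S2 (ip x).

Lemma pclosure_kerim_sum (S1 : lcar (rL (Finv F)) -> Prop) (S2 : rV (Finv F) -> Prop) :
  S1 0 -> S2 0 -> forall x,
  pclosure N (kerim_sum S1 S2) x <->
  rclosure1 (Finv N) S1 S2 (kp x) /\ rclosure2 (Finv N) S1 S2 (ip x).
Proof.
move=> s1 s2 x; split=> [cx | [c1 c2] h hh hk].
- suff key phi psi : @rhom k (Finv F) (Finv N) phi psi -> (forall t, S1 t -> phi t = 0) ->
      (forall t, S2 t -> psi t = 0) -> phi (kp x) = 0 /\ psi (ip x) = 0.
    by split=> phi psi hr k1 k2; have [] := key _ _ hr k1 k2.
  move=> hr k1 k2.
  have hk t : kerim_sum S1 S2 t -> glue phi psi t = 0.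
    by case=> /k1 e1 /k2 e2; rewrite /glue e1 e2 addr0.
  by have /(kerval_imval_eq0 hN) [-> ->] := cx _ (glue_phom hr) hk.
- have k1 t : S1 t -> kerres h t = 0.
    move=> st; apply: val_inj; rewrite /= (kerresE hh) hk //.
    by rewrite /kerim_sum (kp_kerval hF) (ip_kerval hF).
  have k2 t : S2 t -> imres h t = 0.
    move=> st; apply: val_inj; rewrite /= (imresE hh) hk //.
    by rewrite /kerim_sum (kp_imval hF) (ip_imval hF).
  case: (hh) => -[hl _] _.
  rewrite (kerim_decomp hF x) (linmapD hl) -(kerresE hh) -(imresE hh).
  by rewrite (c1 _ _ (res_rhom hh) k1 k2) (c2 _ _ (res_rhom hh) k1 k2) addr0.
Qed.

Lemma rclosed_kerim_sumP (S1 : lcar (rL (Finv F)) -> Prop) (S2 : rV (Finv F) -> Prop) :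
  rclosed (Finv N) S1 S2 <-> pclosed N (kerim_sum S1 S2).
Proof.
split=> [hc | hc].
- have [s1 s2] := rclosed0 hc; case: hc => c1 c2 x.
  change (kerim_sum S1 S2 x <-> pclosure N (kerim_sum S1 S2) x).
  by rewrite pclosure_kerim_sum //; split=> -[/c1 ? /c2 ?].
- have [s1 s2] : S1 0 /\ S2 0.
    case: (pclosed_subspace hc) => -[].
    by rewrite (linmap0 (kp_linmap hF)) (linmap0 (ip_linmap hF)).
  split=> [l | v].
  + have e : kerim_sum S1 S2 (kerval l) <-> pclosure N (kerim_sum S1 S2) (kerval l) := hc _.
    rewrite pclosure_kerim_sum // /kerim_sum (kp_kerval hF) (ip_kerval hF) in e.
    split=> [sl | cl]; first exact: (e.1 (conj sl s2)).1.
    exact: (e.2 (conj cl (@rclosure2_0 _ _ _ _ _))).1.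
  + have e : kerim_sum S1 S2 (imval v) <-> pclosure N (kerim_sum S1 S2) (imval v) := hc _.
    rewrite pclosure_kerim_sum // /kerim_sum (kp_imval hF) (ip_imval hF) in e.
    split=> [sv | cv]; first exact: (e.1 (conj s1 sv)).2.
    exact: (e.2 (conj (@rclosure1_0 _ _ _ _ _) cv)).2.
Qed.

Lemma kerpart_kerim_sum (S1 : lcar (rL (Finv F)) -> Prop) (S2 : rV (Finv F) -> Prop) :
  S2 0 -> kerpart (kerim_sum S1 S2) = S1.
Proof.
move=> s2; apply: funext => l; apply: propext.
by rewrite /kerpart /kerim_sum (kp_kerval hF) (ip_kerval hF); split=> [[]|].
Qed.

Lemma impart_kerim_sum (S1 : lcar (rL (Finv F)) -> Prop) (S2 : rV (Finv F) -> Prop) :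
  S1 0 -> impart (kerim_sum S1 S2) = S2.
Proof.
move=> s1; apply: funext => v; apply: propext.
by rewrite /impart /kerim_sum (kp_imval hF) (ip_imval hF); split=> [[]|].
Qed.

Lemma pclosed_kerim_sum (T : lcar (pL F) -> Prop) :
  pclosed N T -> T = kerim_sum (kerpart T) (impart T).
Proof.
move=> hT; have hs := pclosed_subspace hT; have hp := pclosed_pp hT.
apply: funext => x; apply: propext.
rewrite /kerim_sum /kerpart /impart (kpE hF) (ipE hF); split=> [tx | [t1 t2]].
- by split; [apply: subspaceB => //; apply: hp | apply: hp].
- by rewrite -(subrK (pp F x) x); apply: subspaceD.
Qed.

Lemma kerpart_rcong (T : lcar (pL F) -> Prop) : pcong T -> rcong (kerpart T) (impart T).
Proof.
case=> hs hi _; split.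
- by split; [exact: hs.1 | move=> a x y; exact: hs.2].
- by split; [exact: hs.1 | move=> a x y; exact: hs.2].
- by move=> l t ht; rewrite /kerpart /= (kerbrE hF); apply: hi.
- by move=> l v hv; rewrite /impart /= (imactE hF); apply: hi.
- move=> t v ht; rewrite /impart /= (imactE hF) (lie_brC (liep_lie hF)).
  by apply: subspaceN => //; apply: hi.
Qed.

End FunctorFinv.

Theorem proposition7 (k : fieldType)
  (k_char0 : [pchar k] =i pred0)
  (k_infinite : forall s : seq k, exists x : k, x \notin s) :
  (* (i) *)
  (forall (X Y : finType) (W : ReprD k)
          (ix : X -> lcar (rL W)) (iy : Y -> rV W),
     #|X| = #|Y| -> free_repr W ix iy ->
   forall H : ReprD k, is_repr H ->
   forall (T1 : lcar (rL W) -> Prop) (T2 : rV W -> Prop),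
     rcong T1 T2 -> rclosed H T1 T2 ->
     pcong (dsum T1 T2) /\ pclosed (Ffun H) (dsum T1 T2)) /\
  (* (ii) *)
  (forall (M : finType) (F : LiePD k) (iM : M -> lcar (pL F)),
     free_liep F iM ->
   forall N : LiePD k, is_liep N ->
   forall T : lcar (pL F) -> Prop,
     pcong T -> pclosed N T ->
     rcong (kerpart T) (impart T) /\
     rclosed (Finv N) (kerpart T) (impart T)) /\
  (* (iii) first map: Cl_H(W) -> Cl_{F(H)}(F(W)), (T1,T2) |-> T1 (+) T2 *)
  (forall (X Y : finType) (W : ReprD k)
          (ix : X -> lcar (rL W)) (iy : Y -> rV W),
     #|X| = #|Y| -> free_repr W ix iy ->
   forall H : ReprD k, is_repr H ->
     (forall (T1 : lcar (rL W) -> Prop) (T2 : rV W -> Prop),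
        rclosed H T1 T2 -> pclosed (Ffun H) (dsum T1 T2)) /\
     (forall (T1 S1 : lcar (rL W) -> Prop) (T2 S2 : rV W -> Prop),
        rclosed H T1 T2 -> rclosed H S1 S2 ->
        dsum T1 T2 = dsum S1 S2 -> T1 = S1 /\ T2 = S2) /\
     (forall S : lcar (pL (Ffun W)) -> Prop,
        pclosed (Ffun H) S ->
        exists (T1 : lcar (rL W) -> Prop) (T2 : rV W -> Prop),
          rclosed H T1 T2 /\ dsum T1 T2 = S)) /\
  (* (iii) second map: Cl_N(F(M)) -> Cl_{F^-1(N)}(F^-1(F(M))),
     T |-> (T cap ker p, T cap im p) *)
  (forall (M : finType) (F : LiePD k) (iM : M -> lcar (pL F)),
     free_liep F iM ->
   forall N : LiePD k, is_liep N ->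
     (forall T : lcar (pL F) -> Prop,
        pclosed N T -> rclosed (Finv N) (kerpart T) (impart T)) /\
     (forall T S : lcar (pL F) -> Prop,
        pclosed N T -> pclosed N S ->
        kerpart T = kerpart S -> impart T = impart S -> T = S) /\
     (forall (S1 : lcar (rL (Finv F)) -> Prop) (S2 : rV (Finv F) -> Prop),
        rclosed (Finv N) S1 S2 ->
        exists T : lcar (pL F) -> Prop,
          pclosed N T /\ kerpart T = S1 /\ impart T = S2)).
Proof.
have two_neq0 : (2%:R : k) != 0 by rewrite ((pcharf0P k).1 k_char0 2).
split; last split; last split.
- move=> X Y W ix iy _ [hW _] H hH T1 T2 hc hcl.
  by split; [exact: dsum_pcong | exact/(rclosed_dsumP hW hH)].
- move=> M F iM [hF _] N hN T hc hcl; split; first exact: kerpart_rcong.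
  by rewrite (rclosed_kerim_sumP hF hN two_neq0) -(pclosed_kerim_sum hF hcl).
- move=> X Y W ix iy _ [hW _] H hH; split; last split.
  + by move=> T1 T2 /(rclosed_dsumP hW hH).
  + move=> T1 S1 T2 S2 hT hS.
    have [[t1 t2] [s1 s2]] := (rclosed0 hT, rclosed0 hS); exact: dsum_inj.
  + move=> S hS; exists (fun l => S (l, 0)), (fun v => S (0, v)).
    by rewrite (rclosed_dsumP hW hH) -(pclosed_dsum hS).
- move=> M F iM [hF _] N hN; split; last split.
  + by move=> T hT; rewrite (rclosed_kerim_sumP hF hN two_neq0) -(pclosed_kerim_sum hF hT).
  + move=> T S hT hS e1 e2.
    by rewrite (pclosed_kerim_sum hF hT) (pclosed_kerim_sum hF hS) e1 e2.
  + move=> S1 S2 hS; have [s1 s2] := rclosed0 hS; exists (kerim_sum S1 S2).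
    by rewrite -(rclosed_kerim_sumP hF hN two_neq0) kerpart_kerim_sum // impart_kerim_sum.
Qed.
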